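(* Let $\mathcal{S}=(X,\xrightarrow{\Sigma},\le)$ be a WSTS whose completion $\widehat{\mathcal{S}}$ is deterministic and has strong-strict monotonicity. Let $I\in\mathrm{Idl}(X)$ and $w\in\Sigma^+$ be such that $I\subset w(I)$. Then for every $k\in\mathbb{N}$, $w^k(I)$ and $w^{k+1}(I)$ are defined and $w^k(I)\subset w^{k+1}(I)$.
   Context: A (labeled, ordered) transition system is $\mathcal{S}=(X,\xrightarrow{\Sigma},\le)$: $X$ a set, $\Sigma$ a finite alphabet, relations $\xrightarrow{a}\subseteq X\times X$, $\le$ a quasi-ordering; relations extend to words. $\mathrm{Post}(x,a)=\{y:x\xrightarrow{a}y\}$, extended to sets by union; $\downarrow D=\{x:\exists y\in D,\,x\le y\}$. WSTS: $\le$ a wqo and $x\xrightarrow{a}y$, $x'\ge x$ imply $x'\xrightarrow{w}y'$ for some $w$ and $y'\ge y$. A transition system has strong-strict monotonicity if $x\xrightarrow{a}y$, $x'\ge x$ imply $x'\xrightarrow{a}y'$ for some $y'\ge y$, and $x\xrightarrow{a}y$, $x'>x$ imply $x'\xrightarrow{a}y'$ for some $y'>y$. Deterministic: at most one $a$-successor. Ideals: nonempty downward-closed directed subsets; $\mathrm{Idl}(X)$ their set. Completion $\widehat{\mathcal{S}}=(\mathrm{Idl}(X),\Rightarrow_\Sigma,\subseteq)$: $I\xRightarrow{a}J$ iff $J$ is a $\subseteq$-maximal ideal contained in $\downarrow\mathrm{Post}(I,a)$, extended to words. When deterministic, $w(I)$ denotes the unique $J$ with $I\xRightarrow{w}J$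 if it exists. *)

From Stdlib Require Import List.
Import ListNotations.
Set Implicit Arguments.

Section TS.
Variables (X Sigma : Type) (step : Sigma -> X -> X -> Prop) (le : X -> X -> Prop).

Definition finite_type (A : Type) : Prop := exists l : list A, forall a, In a l.

Fixpoint step_word (w : list Sigma) (x y : X) : Prop :=
  match w with
  | [] => x = y
  | a :: w' => exists z, step a x z /\ step_word w' z y
  end.

Definition quasi_order : Prop :=
  (forall x, le x x) /\ (forall x y z, le x y -> le y z -> le x z).

Definition wqo : Prop :=
  quasi_order /\
  forall f : nat -> X, exists i j, i < j /\ le (f i) (f j).

Definition WSTS : Prop :=
  finite_type Sigma /\ wqo /\
  forall a x y x', step a x y -> le x x' ->
    exists (w : list Sigma) y', step_word w x' y' /\ le y y'.

Definition subset (A B : X -> Prop) : Prop := forall x, A x -> B x.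
Definition strict_subset (A B : X -> Prop) : Prop := subset A B /\ A <> B.

Definition downclose (D : X -> Prop) : X -> Prop :=
  fun x => exists y, D y /\ le x y.

Definition Post (I : X -> Prop) (a : Sigma) : X -> Prop :=
  fun y => exists x, I x /\ step a x y.

Definition ideal (D : X -> Prop) : Prop :=
  (exists x, D x) /\
  (forall x y, D y -> le x y -> D x) /\
  (forall x y, D x -> D y -> exists z, D z /\ le x z /\ le y z).

Definition comp_step (a : Sigma) (I J : X -> Prop) : Prop :=
  ideal I /\ ideal J /\ subset J (downclose (Post I a)) /\
  forall K, ideal K -> subset J K -> subset K (downclose (Post I a)) -> K = J.

Fixpoint comp_word (w : list Sigma) (I J : X -> Prop) : Prop :=
  match w with
  | [] => I = J
  | a :: w' => exists K, comp_step a I K /\ comp_word w' K J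
  end.

Definition comp_deterministic : Prop :=
  forall a I J1 J2, comp_step a I J1 -> comp_step a I J2 -> J1 = J2.

Definition comp_strong_strict_monotone : Prop :=
  (forall a I J I', comp_step a I J -> ideal I' -> subset I I' ->
     exists J', comp_step a I' J' /\ subset J J') /\
  (forall a I J I', comp_step a I J -> ideal I' -> strict_subset I I' ->
     exists J', comp_step a I' J' /\ strict_subset J J').

End TS.

Fixpoint wpow {A : Type} (w : list A) (k : nat) : list A :=
  match k with
  | 0 => []
  | S k' => w ++ wpow w k'
  end.

(* Strict monotonicity of the completion transports a strict inclusion along a
   word: from J_k ⊂ J_(k+1) and J_k =w=> J_(k+1) it yields J_(k+1) =w=> J_(k+2)
   with J_(k+1) ⊂ J_(k+2). Starting from I ⊂ w(I), induction on k gives the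
   whole increasing chain. *)

From Stdlib Require Import List.

Set Implicit Arguments.
Unset Strict Implicit.

Lemma wpow_S_app {A : Type} (w : list A) (k : nat) : wpow w (S k) = wpow w k ++ w.
Proof.
  induction k as [|k IH].
  - simpl. now rewrite app_nil_r.
  - change (wpow w (S (S k))) with (w ++ wpow w (S k)).
    rewrite IH at 1. simpl. now rewrite app_assoc.
Qed.

Section CompletionWords.

Variables (X Sigma : Type) (step : Sigma -> X -> X -> Prop) (le : X -> X -> Prop).

Lemma comp_word_app (u v : list Sigma) (A B C : X -> Prop) :
  comp_word step le u A B -> comp_word step le v B C ->
  comp_word step le (u ++ v) A C.
Proof.
  revert A; induction u as [|a u IH]; simpl; intros A HAB HBC.
  - now subst.
  - destruct HAB as [K [HAK HKB]]. exists K; eauto.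
Qed.

Lemma comp_word_ideal (u : list Sigma) (A B : X -> Prop) :
  comp_word step le u A B -> ideal le A -> ideal le B.
Proof.
  revert A; induction u as [|a u IH]; simpl; intros A HAB HA.
  - now subst.
  - destruct HAB as [K [HAK HKB]]. apply (IH K HKB), HAK.
Qed.

Hypothesis comp_step_strict_mono : forall a A B A',
  comp_step step le a A B -> ideal le A' -> strict_subset A A' ->
  exists B', comp_step step le a A' B' /\ strict_subset B B'.

Lemma comp_word_strict_mono (u : list Sigma) (A B A' : X -> Prop) :
  comp_word step le u A B -> ideal le A' -> strict_subset A A' ->
  exists B', comp_word step le u A' B' /\ strict_subset B B'.
Proof.
  revert A A'; induction u as [|a u IH]; simpl; intros A A' HAB HA' HAA'.
  - subst. eauto.
  - destruct HAB as [K [HAK HKB]].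
    destruct (comp_step_strict_mono HAK HA' HAA') as [K' [HA'K' HKK']].
    destruct (IH K K' HKB (proj1 (proj2 HA'K')) HKK') as [B' [HK'B' HBB']].
    exists B'. split; [exists K'|]; auto.
Qed.

Lemma comp_word_pow_strict_chain (w : list Sigma) (I J : X -> Prop) :
  ideal le I -> comp_word step le w I J -> strict_subset I J ->
  forall k, exists Jk Jk1,
    comp_word step le (wpow w k) I Jk /\ comp_word step le w Jk Jk1 /\
    strict_subset Jk Jk1.
Proof.
  intros HI HIJ HsIJ k; induction k as [|k IH].
  - exists I, J. simpl. auto.
  - destruct IH as [Jk [Jk1 [HIJk [HJkJk1 HsJk]]]].
    assert (HJk1 : ideal le Jk1)
      by exact (comp_word_ideal HJkJk1 (comp_word_ideal HIJk HI)).
    destruct (comp_word_strict_mono HJkJk1 HJk1 HsJk) as [Jk2 [HJk1Jk2 HsJk1]].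
    exists Jk1, Jk2. split; [|split]; auto.
    rewrite wpow_S_app. exact (comp_word_app HIJk HJkJk1).
Qed.

End CompletionWords.

Theorem proposition21 (X Sigma : Type) (step : Sigma -> X -> X -> Prop)
  (le : X -> X -> Prop)
  (HW : WSTS step le)
  (Hdet : comp_deterministic step le)
  (Hmon : comp_strong_strict_monotone step le)
  (I : X -> Prop) (HI : ideal le I) (w : list Sigma) (Hw : w <> nil)
  (Hinc : exists J, comp_word step le w I J /\ strict_subset I J) :
  forall k : nat, exists Jk Jk1,
    comp_word step le (wpow w k) I Jk /\
    comp_word step le (wpow w (S k)) I Jk1 /\
    strict_subset Jk Jk1.
Proof.
  destruct Hinc as [J [HIJ HsIJ]].
  intro k.
  destruct (comp_word_pow_strict_chain (proj2 Hmon) HI HIJ HsIJ k)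
    as [Jk [Jk1 [HIJk [HJkJk1 HsJk]]]].
  exists Jk, Jk1. split; [|split]; auto.
  rewrite wpow_S_app. exact (comp_word_app HIJk HJkJk1).
Qed.
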